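(* Let $\boldsymbol{f}\in\mathbb{R}^E$ satisfy $\boldsymbol{u}^-_e<\boldsymbol{f}_e<\boldsymbol{u}^+_e$ for all $e$ and $\boldsymbol{c}^\top\boldsymbol{f}>F^*$. Let $\tilde{\boldsymbol{g}}\in\mathbb{R}^E$ satisfy $\|\mathbf{L}(\boldsymbol{f})^{-1}(\tilde{\boldsymbol{g}}-\boldsymbol{g}(\boldsymbol{f}))\|_\infty\le\kappa/8$ for some $\kappa\in(0,1)$, and $\tilde{\boldsymbol{\ell}}\in\mathbb{R}^E_{>0}$ satisfy $\tilde{\boldsymbol{\ell}}\approx_2\boldsymbol{\ell}(\boldsymbol{f})$. Let $\boldsymbol{\Delta}$ satisfy $\mathbf{B}^\top\boldsymbol{\Delta}=0$ and $\tilde{\boldsymbol{g}}^\top\boldsymbol{\Delta}/\|\tilde{\mathbf{L}}\boldsymbol{\Delta}\|_1\le-\kappa$, and let $\eta$ satisfy $\eta\,\tilde{\boldsymbol{g}}^\top\boldsymbol{\Delta}=-\kappa^2/50$. Then $\Phi(\boldsymbol{f}+\eta\boldsymbol{\Delta})\le\Phi(\boldsymbol{f})-\kappa^2/500$.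
   Context: Setting: $G=(V,E)$ is a directed graph with $m=|E|$ edges and edge-vertex incidence matrix $\mathbf{B}$ (row of edge $(a,b)$ has $+1$ at $a$, $-1$ at $b$); demands $\boldsymbol{d}\in\mathbb{Z}^V$, lower/upper capacities $\boldsymbol{u}^-,\boldsymbol{u}^+\in\mathbb{Z}^E$, and costs $\boldsymbol{c}\in\mathbb{Z}^E$ are integers bounded in absolute value by $U$. $F^*=\min\{\boldsymbol{c}^\top\boldsymbol{f}:\mathbf{B}^\top\boldsymbol{f}=\boldsymbol{d},\ \boldsymbol{u}^-\le\boldsymbol{f}\le\boldsymbol{u}^+\}$. Let $\alpha=1/(1000\log(mU))$ and $\Phi(\boldsymbol{f})=20m\log(\boldsymbol{c}^\top\boldsymbol{f}-F^* )+\sum_{e\in E}\big((\boldsymbol{u}^+_e-\boldsymbol{f}_e)^{-\alpha}+(\boldsymbol{f}_e-\boldsymbol{u}^-_e)^{-\alpha}\big)$. Lengths: $\boldsymbol{\ell}(\boldsymbol{f})_e=(\boldsymbol{u}^+_e-\boldsymbol{f}_e)^{-1-\alpha}+(\boldsymbol{f}_e-\boldsymbol{u}^-_e)^{-1-\alpha}$; gradients $\boldsymbol{g}(\boldsymbol{f})=\nabla\Phi(\boldsymbol{f})$, i.e. $\boldsymbol{g}(\boldsymbol{f})_e=20m(\boldsymbol{c}^\top\boldsymbol{f}-F^* )^{-1}\boldsymbol{c}_e+\alpha(\boldsymbol{u}^+_e-\boldsymbol{f}_e)^{-1-\alpha}-\alpha(\boldsymbol{f}_e-\boldsymbol{u}^-_e)^{-1-\alpha}$.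 $\mathbf{L}(\boldsymbol{f})=\mathrm{diag}(\boldsymbol{\ell}(\boldsymbol{f}))$, $\tilde{\mathbf{L}}=\mathrm{diag}(\tilde{\boldsymbol{\ell}})$. For positive vectors, $\boldsymbol{x}\approx_\beta\boldsymbol{y}$ means $\beta^{-1}\boldsymbol{y}_i\le\boldsymbol{x}_i\le\beta\boldsymbol{y}_i$ for all $i$. *)

From mathcomp Require Import all_boot all_order all_algebra.
From mathcomp Require Import all_classical all_reals all_analysis.
Set Implicit Arguments. Unset Strict Implicit. Unset Printing Implicit Defensive.
Import Order.TTheory GRing.Theory Num.Theory.
Local Open Scope ring_scope.

Section Defs.
Variable R : realType.
Variables (V : finType) (m : nat).
Variables (src dst : 'I_m -> V).

(* Edge-vertex incidence matrix B: row of edge (a,b) has +1 at a, -1 at b. *)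
Definition incB (e : 'I_m) (v : V) : R := (src e == v)%:R - (dst e == v)%:R.

Definition BT (x : 'I_m -> R) (v : V) : R := \sum_(e < m) incB e v * x e.

Definition dotE (x y : 'I_m -> R) : R := \sum_(e < m) x e * y e.

Definition norm1 (x : 'I_m -> R) : R := \sum_(e < m) `|x e|.
Definition norminf (x : 'I_m -> R) : R := \big[Num.max/0]_(e < m) `|x e|.

Definition feasible (d : V -> R) (um up f : 'I_m -> R) : Prop :=
  (forall v, BT f v = d v) /\ (forall e, um e <= f e <= up e).

Definition is_min_cost (d : V -> R) (um up c : 'I_m -> R) (Fstar : R) : Prop :=
  (exists f0, feasible d um up f0 /\ dotE c f0 = Fstar) /\
  (forall f, feasible d um up f -> Fstar <= dotE c f).

Definition alpha (U : nat) : R := 1 / (1000 * ln ((m * U)%:R)).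

Definition Phi (U : nat) (Fstar : R) (um up c f : 'I_m -> R) : R :=
  20 * m%:R * ln (dotE c f - Fstar)
  + \sum_(e < m) (powR (up e - f e) (- alpha U) + powR (f e - um e) (- alpha U)).

Definition ell (U : nat) (um up f : 'I_m -> R) (e : 'I_m) : R :=
  powR (up e - f e) (-1 - alpha U) + powR (f e - um e) (-1 - alpha U).

Definition grad (U : nat) (Fstar : R) (um up c f : 'I_m -> R) (e : 'I_m) : R :=
  20 * m%:R * (dotE c f - Fstar)^-1 * c e
  + alpha U * powR (up e - f e) (-1 - alpha U)
  - alpha U * powR (f e - um e) (-1 - alpha U).

End Defs.

(* Write delta = eta Delta and M = sum_e ell_e |delta_e|.  The choice of eta makes
   g~ . delta = -kappa^2/50, and together with g~ . Delta <= -kappa ||L~ Delta||_1 and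
   L~ ~ L it forces M <= kappa/25; in particular every edge moves by at most a quarter
   of its inverse length.  On that scale the barrier x^(-alpha) obeys the second-order
   bound (s + t)^(-a) <= s^(-a) - a s^(-1-a) t + 6 a (s^(-1-a) t)^2, provided the slack s
   satisfies s^a <= 2; this holds for all slacks s <= 2U because
   alpha ln((mU)^2) = 1/500.  The cost term 20 m ln(c^T f - F_star) is concave, so
   Phi(f + delta) <= Phi(f) + grad . delta + 6 alpha M^2, and replacing grad by g~ costs
   at most kappa/8 M.  Altogether the decrease is at least
   kappa^2/50 - kappa^2/200 - 6 kappa^2/(8 * 625) >= kappa^2/500. *)

From mathcomp Require Import all_boot all_order all_algebra.
From mathcomp Require Import all_classical all_reals all_analysis.
From mathcomp Require Import ring lra.
Set Implicit Arguments. Unset Strict Implicit. Unset Printing Implicit Defensive.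
Import Order.TTheory GRing.Theory Num.Theory.
Local Open Scope ring_scope.

Section ElementaryBounds.
Variable R : realType.
Implicit Types b r s t x h : R.

Lemma expR_le_quad x : x <= 1/2 -> expR x <= 1 + x + 2 * x ^+ 2.
Proof.
move=> x_le.
have inv_exp : expR x * expR (- x) = 1 := expRxMexpNx_1 x.
have lin_exp : 1 - x <= expR (- x) := expR_ge1Dx (- x).
have cubic : 0 <= x ^+ 2 * (1 - 2 * x) by rewrite mulr_ge0 ?sqr_ge0 //; lra.
have := expR_gt0 x; nra.
Qed.

Lemma le_div_ln1Dx x : -1 < x -> x / (1 + x) <= ln (1 + x).
Proof.
move=> x_gt; have x1_gt0 : 0 < 1 + x by lra.
have inv_gt0 : 0 < (1 + x)^-1 by rewrite invr_gt0.
have := @le_ln1Dx R ((1 + x)^-1 - 1) ltac:(lra).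
have -> : 1 + ((1 + x)^-1 - 1) = (1 + x)^-1 by ring.
have -> : (1 + x)^-1 - 1 = - (x / (1 + x)) by field; lra.
rewrite lnV ?posrE //; lra.
Qed.

Lemma ln_le_div x h : 0 < x -> 0 < x + h -> ln (x + h) <= ln x + h / x.
Proof.
move=> x_gt0 xh_gt0.
have -> : x + h = x * (1 + h / x) by field; lra.
have hx_gt : -1 < h / x by rewrite ltr_pdivlMr //; lra.
by rewrite lnM ?posrE ?lerD2l ?le_ln1Dx //; lra.
Qed.

Lemma powR1DN_le_quad b r : 0 < b <= 1/8 -> `|r| <= 1/2 ->
  (1 + r) `^ (- b) <= 1 - b * r + 3 * b * r ^+ 2.
Proof.
move=> /andP[b_gt0 b_le] /[dup] r_small; rewrite ler_norml => /andP[r_ge r_le].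
rewrite /powR gt_eqF /=; last lra.
set L := ln (1 + r).
have L_le : L <= r by apply: le_ln1Dx; lra.
have L_ge : r / (1 + r) <= L by apply: le_div_ln1Dx; lra.
have r1_pos : 0 < 1 + r by lra.
have L_ge_quad : r - 2 * r ^+ 2 <= L.
  apply: le_trans L_ge; rewrite ler_pdivlMr //.
  have : 0 <= r ^+ 2 * (1 + 2 * r) by rewrite mulr_ge0 ?sqr_ge0 //; lra.
  lra.
have L_sqr : L ^+ 2 <= 4 * r ^+ 2.
  case: (lerP 0 L) => L_sign; first nra.
  have r_le0 : r <= 0.
    rewrite leNgt; apply/negP => r_gt0.
    have : 0 <= r * (1 - 2 * r) by rewrite mulr_ge0 //; lra.
    lra.
  have : 0 <= - r * (1 + 2 * r) by rewrite mulr_ge0 //; lra.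
  nra.
apply: le_trans (expR_le_quad _) _; first nra.
have lin : - (b * L) <= - (b * r) + 2 * b * r ^+ 2 by nra.
have quad : b * (b * L ^+ 2) <= b * (1/8 * (4 * r ^+ 2)).
  by rewrite ler_pM2l // ler_pM ?sqr_ge0 //; lra.
lra.
Qed.

Lemma powRDN_le_quad b s t : 0 < b <= 1/8 -> 0 < s -> s `^ b <= 2 ->
  `|t| * s `^ (-1 - b) <= 1/4 ->
  (s + t) `^ (- b)
    <= s `^ (- b) - b * (s `^ (-1 - b) * t) + 6 * b * (s `^ (-1 - b) * t) ^+ 2.
Proof.
move=> b_bnd s_gt0 w_le2 t_small.
(* (s + t)^(-b) = s^(-b) (1 + t/s)^(-b), with |t/s| = |t| s^(-1-b) s^b <= 1/2. *)
have s_neq0 : s != 0 by rewrite gt_eqF.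
set p := s `^ (-1 - b); set q := s `^ (- b); set w := s `^ b in w_le2 *.
have p_gt0 : 0 < p by rewrite powR_gt0.
have w_gt0 : 0 < w by rewrite powR_gt0.
have q_ge0 : 0 <= q by rewrite powR_ge0.
have qw : q * w = 1 by rewrite /q powRN mulVf // gt_eqF.
have ps : p * s = q.
  rewrite /p /q (_ : -1 - b = - b + -1); last by ring.
  by rewrite powRD ?s_neq0 ?implybT // powR_inv1 ?divfK // ltW.
set r := t / s.
have r_eq : r = p * t * w.
  have -> : p = q / s by rewrite -ps mulfK.
  by rewrite /r -[LHS]mul1r -qw; field.
have r_small : `|r| <= 1/2.
  rewrite r_eq (mulrC p) !normrM (gtr0_norm p_gt0) (gtr0_norm w_gt0).
  have tp_ge0 : 0 <= `|t| * p by rewrite mulr_ge0 // ltW.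
  have := ler_pM tp_ge0 (ltW w_gt0) t_small w_le2; lra.
have -> : s + t = s * (1 + r) by rewrite /r; field.
have r1_ge0 : 0 <= 1 + r by move: r_small; rewrite ler_norml; lra.
rewrite (powRM _ (ltW s_gt0) r1_ge0) -/q.
apply: le_trans (ler_wpM2l q_ge0 (powR1DN_le_quad b_bnd r_small)) _.
have qr : q * r = p * t by rewrite r_eq -[RHS]mul1r -qw; ring.
have qr2 : q * r ^+ 2 = (p * t) ^+ 2 * w by rewrite r_eq -[RHS]mul1r -qw; ring.
have : b * ((p * t) ^+ 2 * w) <= b * ((p * t) ^+ 2 * 2).
  have b_ge0 : 0 <= b by case/andP: b_bnd => /ltW.
  by rewrite ler_wpM2l // ler_wpM2l ?sqr_ge0.
have -> : q * (1 - b * r + 3 * b * r ^+ 2) = q - b * (q * r) + 3 * b * (q * r ^+ 2) by ring.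
rewrite qr qr2; lra.
Qed.

Lemma step_length_le (D N kappa eta : R) : 0 < kappa -> 0 <= N ->
  D / N <= - kappa -> eta * D = - (kappa ^+ 2 / 50) ->
  0 < eta /\ eta * N <= kappa / 50.
Proof.
move=> k_gt0 N_ge0 ratio eta_D.
have N_gt0 : 0 < N.
  rewrite lt_neqAle N_ge0 andbT; apply/eqP => N0.
  by move: ratio; rewrite -N0 invr0 mulr0; lra.
move: ratio; rewrite ler_pdivrMr // => D_le.
have k2_gt0 : 0 < kappa ^+ 2 by rewrite exprn_gt0.
have eta_gt0 : 0 < eta.
  rewrite ltNge; apply/negP => eta_le0.
  have : 0 <= eta * D by rewrite mulr_le0 //; nra.
  lra.
split=> //; rewrite -(ler_pM2l k_gt0).
have : eta * (kappa * N) <= eta * (- D) by apply: ler_wpM2l; [exact: ltW | lra].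
rewrite expr2 in eta_D; nra.
Qed.

End ElementaryBounds.

Section EdgeVectors.
Variables (R : realType) (m : nat).
Implicit Types (x g h w : 'I_m -> R) (eps : R).

Lemma sum_sqr_le_sqr_sum x : \sum_(e < m) x e ^+ 2 <= (\sum_(e < m) `|x e|) ^+ 2.
Proof.
set S := \sum_(e < m) `|x e|.
have term e : x e ^+ 2 <= `|x e| * S.
  rewrite -real_normK ?num_real // expr2 ler_wpM2l //.
  by rewrite /S (bigD1 e) //= lerDl sumr_ge0.
by rewrite [X in _ <= X]expr2 mulr_suml; apply: ler_sum => e _; exact: term.
Qed.

Lemma dotE_approx g h w x eps : (forall e, `|g e - h e| <= eps * w e) ->
  `|dotE g x - dotE h x| <= eps * \sum_(e < m) w e * `|x e|.
Proof.
move=> gh; rewrite /dotE -sumrB mulr_sumr.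
apply: le_trans (ler_norm_sum _ _ _) _; apply: ler_sum => e _.
by rewrite -mulrBl normrM mulrA ler_wpM2r.
Qed.

Lemma norminf_scaled_le w x eps : (forall e, 0 < w e) ->
  norminf (fun e => (w e)^-1 * x e) <= eps -> forall e, `|x e| <= eps * w e.
Proof.
move=> w_gt0 x_le e; have := le_trans (le_bigmax _ _ e) x_le.
by rewrite normrM normfV (gtr0_norm (w_gt0 e)) mulrC ler_pdivrMr.
Qed.

End EdgeVectors.

Section AlphaBounds.
Variables (R : realType) (m U : nat).
Hypothesis mU_gt1 : (1 < m * U)%N.
Local Notation X := ((m * U)%:R : R).

Let ln_X_ge : 1/2 <= ln X.
Proof.
have := @le_div_ln1Dx R 1 ltac:(lra); rewrite (_ : 1 + 1 = 2) //.
move/le_trans; apply; rewrite ler_ln ?posrE ?ltr0n ?ler_nat //.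
exact: ltnW.
Qed.

Lemma alpha_mul_ln : alpha R m U * ln X = 1/1000.
Proof. by rewrite /alpha; field; rewrite gt_eqF //; have := ln_X_ge; lra. Qed.

Lemma alpha_gt0 : 0 < alpha R m U.
Proof.
have := ln_X_ge; rewrite /alpha => l_ge.
by apply: divr_gt0; [lra | apply: mulr_gt0; lra].
Qed.

Lemma alpha_le : alpha R m U <= 1/500.
Proof.
have := alpha_mul_ln; have := ln_X_ge; have := alpha_gt0.
move: (alpha R m U) (ln X) => a l a_gt0 l_ge la.
have : 0 <= a * (l - 1/2) by rewrite mulr_ge0 //; lra.
lra.
Qed.

Lemma powR_alpha_le2 s : 0 < s <= 2 * U%:R -> s `^ alpha R m U <= 2.
Proof.
case/andP=> s_gt0 s_le.
have X_ge2 : 2 <= X by rewrite (ler_nat R 2).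
have m_gt0 : (0 < m)%N by move: (ltnW mU_gt1); rewrite muln_gt0 => /andP[].
have U_le : U%:R <= X by rewrite ler_nat leq_pmull.
have s_le_X2 : s <= X ^+ 2.
  have : 0 <= (X - 2) * X by rewrite mulr_ge0; lra.
  rewrite expr2; lra.
have X2_gt0 : 0 < X ^+ 2 by rewrite exprn_gt0; lra.
apply: le_trans (ge0_ler_powR (ltW alpha_gt0) _ _ s_le_X2) _;
  rewrite ?nnegrE; [exact: ltW | exact: ltW |].
rewrite /powR gt_eqF // lnXn; last lra.
rewrite mulrnAr -mulr_natr alpha_mul_ln.
apply: le_trans (expR_le_quad _) _; lra.
Qed.

End AlphaBounds.

Section PotentialDescent.
Variables (R : realType) (m U : nat) (Fstar : R) (um up c f : 'I_m -> R).
Hypothesis m_gt0 : (0 < m)%N.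
Hypothesis f_interior : forall e, um e < f e < up e.
Hypothesis cost_gap : Fstar < dotE c f.
Hypothesis alpha_small : 0 < alpha R m U <= 1/8.
Hypothesis slack_width : forall e,
  (up e - f e) `^ alpha R m U <= 2 /\ (f e - um e) `^ alpha R m U <= 2.

Local Notation β := (alpha R m U).
Local Notation Phi_at := (Phi U Fstar um up c).
Local Notation ell_f := (ell U um up f).
Local Notation grad_f := (grad U Fstar um up c f).
Local Notation barrier e x := ((up e - x) `^ (- β) + (x - um e) `^ (- β)).
Local Notation barrier_slope e :=
  ((up e - f e) `^ (-1 - β) - (f e - um e) `^ (-1 - β)).

Lemma ell_gt0 e : 0 < ell_f e.
Proof.
have [um_lt f_lt] := andP (f_interior e).
by apply: addr_gt0; apply: powR_gt0; rewrite subr_gt0.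
Qed.

Lemma barrier_edge_le e d : `|d| * ell_f e <= 1/4 ->
  barrier e (f e + d)
    <= barrier e (f e) + β * barrier_slope e * d + 6 * β * (ell_f e * d) ^+ 2.
Proof.
move=> d_small; have [um_lt f_lt] := andP (f_interior e).
have [β_gt0 _] := andP alpha_small.
rewrite /ell in d_small *.
set A := (up e - f e) `^ (-1 - β) in d_small *.
set B := (f e - um e) `^ (-1 - β) in d_small *.
have A_ge0 : 0 <= A by apply: powR_ge0.
have B_ge0 : 0 <= B by apply: powR_ge0.
have dA_small : `|- d| * A <= 1/4.
  by rewrite normrN; have := mulr_ge0 (normr_ge0 d) B_ge0; lra.
have dB_small : `|d| * B <= 1/4.
  by have := mulr_ge0 (normr_ge0 d) A_ge0; lra.
have up_slack : 0 < up e - f e by rewrite subr_gt0.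
have um_slack : 0 < f e - um e by rewrite subr_gt0.
have up_step := powRDN_le_quad alpha_small up_slack (slack_width e).1 dA_small.
have um_step := powRDN_le_quad alpha_small um_slack (slack_width e).2 dB_small.
rewrite -/A in up_step; rewrite -/B in um_step.
have -> : up e - (f e + d) = up e - f e + - d by ring.
have -> : f e + d - um e = f e - um e + d by ring.
have sq : (A * - d) ^+ 2 + (B * d) ^+ 2 <= ((A + B) * d) ^+ 2.
  have -> : ((A + B) * d) ^+ 2 = (A * - d) ^+ 2 + (B * d) ^+ 2 + 2 * (A * B) * d ^+ 2.
    by ring.
  have : 0 <= 2 * (A * B) * d ^+ 2.
    by apply: mulr_ge0; [apply: mulr_ge0; [lra | exact: mulr_ge0] | exact: sqr_ge0].
  lra.
have := ler_wpM2l (ltW (mulr_gt0 (ltr0Sn R 5) β_gt0)) sq.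
have -> : β * (A - B) * d = - (β * (A * - d)) - β * (B * d) by ring.
lra.
Qed.

Lemma Phi_step_le d : (forall e, `|d e| * ell_f e <= 1/4) ->
  0 < dotE c f - Fstar + dotE c d ->
  Phi_at (fun e => f e + d e)
    <= Phi_at f + dotE grad_f d + 6 * β * (\sum_(e < m) ell_f e * `|d e|) ^+ 2.
Proof.
move=> d_small shifted_gap.
have [β_gt0 _] := andP alpha_small.
set G := dotE c f - Fstar in shifted_gap *.
have G_gt0 : 0 < G by rewrite subr_gt0.
set K := 20 * m%:R / G.
have cost_shift : dotE c (fun e => f e + d e) - Fstar = G + dotE c d.
  rewrite /G /dotE -addrAC -big_split /=; congr (_ - _).
  by apply: eq_bigr => e _; ring.
have log_le : 20 * m%:R * ln (G + dotE c d) <= 20 * m%:R * ln G + K * dotE c d.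
  have m20_gt0 : 0 < 20 * m%:R :> R by apply: mulr_gt0; [lra | rewrite ltr0n].
  have -> : 20 * m%:R * ln G + K * dotE c d = 20 * m%:R * (ln G + dotE c d / G).
    by rewrite /K; ring.
  by rewrite ler_pM2l //; exact: ln_le_div.
have grad_split :
    dotE grad_f d = K * dotE c d + \sum_(e < m) β * barrier_slope e * d e.
  rewrite /dotE mulr_sumr -big_split /=; apply: eq_bigr => e _.
  by rewrite /grad /K /G; ring.
have barrier_le : \sum_(e < m) barrier e (f e + d e)
    <= \sum_(e < m) barrier e (f e) + \sum_(e < m) β * barrier_slope e * d e
       + 6 * β * \sum_(e < m) (ell_f e * d e) ^+ 2.
  rewrite mulr_sumr -!big_split /=; apply: ler_sum => e _.
  exact: barrier_edge_le.
have sq_le : \sum_(e < m) (ell_f e * d e) ^+ 2 <= (\sum_(e < m) ell_f e * `|d e|) ^+ 2.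
  apply: le_trans (sum_sqr_le_sqr_sum _) _.
  by under eq_bigr => e _ do rewrite normrM (gtr0_norm (ell_gt0 e)).
have := ler_wpM2l (ltW (mulr_gt0 (ltr0Sn R 5) β_gt0)) sq_le.
rewrite /Phi cost_shift -/G grad_split.
lra.
Qed.

Lemma grad_sub_cost_le e :
  `|grad_f e - 20 * m%:R / (dotE c f - Fstar) * c e| <= β * ell_f e.
Proof.
have [β_gt0 _] := andP alpha_small.
rewrite /grad /ell.
set A := (up e - f e) `^ (-1 - β); set B := (f e - um e) `^ (-1 - β).
have -> : 20 * m%:R * (dotE c f - Fstar)^-1 * c e + β * A - β * B
          - 20 * m%:R / (dotE c f - Fstar) * c e = β * (A - B) by ring.
rewrite normrM (gtr0_norm β_gt0); apply: ler_wpM2l; first exact: ltW.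
apply: le_trans (ler_normB _ _) _.
by rewrite !ger0_norm ?powR_ge0.
Qed.

Lemma Phi_descent kappa gt lt Delta eta :
  0 < kappa < 1 ->
  (forall e, `|gt e - grad_f e| <= kappa / 8 * ell_f e) ->
  (forall e, ell_f e <= 2 * lt e) ->
  dotE gt Delta / norm1 (fun e => lt e * Delta e) <= - kappa ->
  eta * dotE gt Delta = - (kappa ^+ 2 / 50) ->
  Phi_at (fun e => f e + eta * Delta e) <= Phi_at f - kappa ^+ 2 / 500.
Proof.
move=> /andP[k_gt0 k_lt1] gt_close ell_le ratio eta_D.
have [β_gt0 β_le] := andP alpha_small.
have N_ge0 : 0 <= norm1 (fun e => lt e * Delta e) by apply: sumr_ge0.
have [eta_gt0 eta_N] := step_length_le k_gt0 N_ge0 ratio eta_D.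
pose d e := eta * Delta e.
set M := \sum_(e < m) ell_f e * `|d e|.
have M_ge0 : 0 <= M.
  by apply: sumr_ge0 => e _; apply: mulr_ge0; [exact: ltW (ell_gt0 e) | exact: normr_ge0].
have M_le : M <= kappa / 25.
  have : M <= 2 * (eta * norm1 (fun e => lt e * Delta e)).
    rewrite /norm1 !mulr_sumr; apply: ler_sum => e _.
    rewrite /d !normrM (gtr0_norm eta_gt0).
    have : ell_f e <= 2 * `|lt e| by have := ler_norm (lt e); have := ell_le e; lra.
    move/(ler_wpM2r (normr_ge0 (Delta e)))/(ler_wpM2l (ltW eta_gt0)).
    lra.
  lra.
have d_small e : `|d e| * ell_f e <= 1/4.
  have : ell_f e * `|d e| <= M.
    rewrite /M (bigD1 e) //= lerDl; apply: sumr_ge0 => i _.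
    by apply: mulr_ge0; [exact: ltW (ell_gt0 i) | exact: normr_ge0].
  rewrite mulrC; lra.
have gt_d : dotE gt d = - (kappa ^+ 2 / 50).
  by rewrite -eta_D /dotE /d mulr_sumr; apply: eq_bigr => e _; ring.
have /andP[grad_d_ge grad_d_le] :
    dotE gt d - kappa / 8 * M <= dotE grad_f d <= dotE gt d + kappa / 8 * M.
  by have := dotE_approx d gt_close; rewrite -/M distrC ler_distl.
set G := dotE c f - Fstar.
have G_gt0 : 0 < G by rewrite subr_gt0.
set K := 20 * m%:R / G.
have cost_d : dotE (fun e => K * c e) d = K * dotE c d.
  by rewrite /dotE mulr_sumr; apply: eq_bigr => e _; ring.
(* The new cost gap stays positive: by grad_sub_cost_le the linearised change
   of the log term is within alpha M of grad . delta, hence at least -1/2. *)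
have K_cost_ge : - (1/2) <= K * dotE c d.
  have := dotE_approx d grad_sub_cost_le; rewrite -/M cost_d ler_distl => /andP[_ +].
  have : (kappa / 8 + β) * M <= 1/4 * (kappa / 25).
    by apply: ler_pM; lra.
  have : kappa ^+ 2 <= 1 by rewrite expr2; nra.
  lra.
have cost_pos : 0 < G + dotE c d.
  have m_ge1 : 1 <= m%:R :> R by rewrite ler1n.
  have : - (1/2) * G <= 20 * m%:R * dotE c d.
    have -> : 20 * m%:R * dotE c d = K * dotE c d * G by rewrite /K; field; lra.
    by rewrite ler_pM2r.
  case: (lerP 0 (dotE c d)) => cost_sign; first lra.
  have : 0 <= (m%:R - 1) * - dotE c d by apply: mulr_ge0; lra.
  lra.
have := Phi_step_le d_small cost_pos; rewrite -/M.
have : kappa * M <= kappa * (kappa / 25) by rewrite ler_pM2l.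
have : M ^+ 2 <= (kappa / 25) ^+ 2 by rewrite ler_pXn2r // nnegrE; lra.
have : β * M ^+ 2 <= 1/8 * M ^+ 2 by rewrite ler_wpM2r // sqr_ge0.
rewrite !expr2 in gt_d *.
lra.
Qed.

End PotentialDescent.

Theorem lemma4p4 (R : realType) (V : finType) (m : nat) (src dst : 'I_m -> V)
  (U : nat) (d : V -> int) (um up c : 'I_m -> int)
  (hU : (1 < m * U)%N)
  (hd : forall v, `|d v| <= U%:Z) (hum : forall e, `|um e| <= U%:Z)
  (hup : forall e, `|up e| <= U%:Z) (hc : forall e, `|c e| <= U%:Z)
  (Fstar : R)
  (hF : is_min_cost src dst (fun v => (d v)%:~R) (fun e => (um e)%:~R)
          (fun e => (up e)%:~R) (fun e => (c e)%:~R) Fstar)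
  (f : 'I_m -> R)
  (hf : forall e, (um e)%:~R < f e < (up e)%:~R)
  (hgap : Fstar < dotE (fun e => (c e)%:~R) f)
  (kappa : R) (hk : 0 < kappa < 1)
  (gt : 'I_m -> R)
  (hgt : norminf (fun e =>
            (ell U (fun e => (um e)%:~R) (fun e => (up e)%:~R) f e)^-1 *
            (gt e - grad U Fstar (fun e => (um e)%:~R) (fun e => (up e)%:~R)
                      (fun e => (c e)%:~R) f e)) <= kappa / 8)
  (lt : 'I_m -> R) (hlt0 : forall e, 0 < lt e)
  (hlt : forall e,
     2^-1 * ell U (fun e => (um e)%:~R) (fun e => (up e)%:~R) f e <= lt e /\
     lt e <= 2 * ell U (fun e => (um e)%:~R) (fun e => (up e)%:~R) f e)
  (Delta : 'I_m -> R) (hcirc : forall v, BT src dst Delta v = 0)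
  (hratio : dotE gt Delta / norm1 (fun e => lt e * Delta e) <= - kappa)
  (eta : R) (heta : eta * dotE gt Delta = - (kappa ^+ 2 / 50)) :
  Phi U Fstar (fun e => (um e)%:~R) (fun e => (up e)%:~R) (fun e => (c e)%:~R)
      (fun e => f e + eta * Delta e)
  <= Phi U Fstar (fun e => (um e)%:~R) (fun e => (up e)%:~R) (fun e => (c e)%:~R) f
     - kappa ^+ 2 / 500.
Proof.
have m_gt0 : (0 < m)%N by move: (ltnW hU); rewrite muln_gt0 => /andP[].
have cap_bound (z : int) : `|z| <= U%:Z -> - (U%:R : R) <= z%:~R <= (U%:R : R).
  by rewrite ler_norml -[U%:R]/((U%:Z)%:~R : R) -mulrNz !ler_int.
have slack_range e :
    0 < (up e)%:~R - f e <= 2 * U%:R /\ 0 < f e - (um e)%:~R <= 2 * U%:R.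
  have /andP[_ up_le] := cap_bound _ (hup e).
  have /andP[um_ge _] := cap_bound _ (hum e).
  have /andP[um_lt f_lt] := hf e.
  by rewrite !subr_gt0 um_lt f_lt /=; split; lra.
have alpha_small : 0 < alpha R m U <= 1/8.
  by rewrite alpha_gt0 //=; have := alpha_le R hU; lra.
apply: (Phi_descent m_gt0 hf hgap alpha_small _ hk _ _ hratio heta).
- move=> e; have [up_range um_range] := slack_range e.
  by split; apply: (powR_alpha_le2 hU).
- exact: (norminf_scaled_le (ell_gt0 U hf) hgt).
- by move=> e; rewrite -ler_pdivrMl ?ltr0n //; exact: (hlt e).1.
Qed.
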